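(* Let $n\ge 2$ and let $\alpha,\beta$ be $n$-cycles in the symmetric group $S_{n+1}$. Then there is an integer $d$ with $1\le d\le n-1$ such that $\alpha\beta^d$ is not an $n$-cycle.
   Context: Permutations act on the right and $\alpha\beta$ means first $\alpha$, then $\beta$. *)

From mathcomp Require Import all_boot all_fingroup.
Set Implicit Arguments. Unset Strict Implicit. Unset Printing Implicit Defensive.

Definition is_cycle_of_length (T : finType) (k : nat) (s : {perm T}) : Prop :=
  exists x : T, #|porbit s x| = k /\ forall y, y \notin porbit s x -> s y = y.

From mathcomp Require Import all_boot all_fingroup.
From mathcomp Require Import zify.
Set Implicit Arguments. Unset Strict Implicit. Unset Printing Implicit Defensive.

(* An n-cycle of a set of n+1 points fixes exactly one point and cycles the
   others, so it suffices to find d such that a * b^d does not have exactly one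
   fixed point.  If a and b fix the same point p, take x <> p: then
   x = b^d (a x) for some 0 < d < n, and a * b^d fixes both x and p.  If they
   fix distinct points p and q and every a * b^d (0 < d < n) had a fixed point
   g d, then b^d (a (g d)) = g d forces the g d to be pairwise distinct and to
   avoid p, q and a^-1 q: that is n - 1 points among n - 2. *)

Section PermOrbit.

Variables (T : finType) (s : {perm T}).

Lemma porbit_exp_inj x i j :
  i < #|porbit s x| -> j < #|porbit s x| -> (s ^+ i)%g x = (s ^+ j)%g x -> i = j.
Proof.
move=> lti ltj; rewrite !permX => eq_ij; apply/eqP.
rewrite -(nth_uniq x _ _ (uniq_traject_porbit s x)) ?size_traject //.
by rewrite !nth_traject // eq_ij.
Qed.

Lemma porbit_expP x y :
  y \in porbit s x -> exists2 i, i < #|porbit s x| & y = (s ^+ i)%g x.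
Proof. by rewrite porbit_traject => /trajectP[i lti ->]; exists i; rewrite ?permX. Qed.

Definition cycle_on (A : {set T}) := forall x, x \in A -> porbit s x = A.

Lemma cycle_on_setC1_fix q : cycle_on [set~ q] -> s q = q.
Proof.
move=> cyc; apply/eqP; apply: contraT => sq.
have := porbit_id s q; rewrite -(porbit_perm s 1) expg1 cyc ?inE //.
by rewrite eqxx.
Qed.

Variable A : {set T}.
Hypothesis cycA : cycle_on A.

Lemma cycle_on_exp x k : x \in A -> (s ^+ k)%g x \in A.
Proof. by move=> Ax; rewrite -(cycA Ax) mem_porbit. Qed.

Lemma cycle_on_perm x : x \in A -> s x \in A.
Proof. by move=> /(cycle_on_exp 1); rewrite expg1. Qed.

Lemma cycle_on_expP x y : x \in A -> y \in A -> exists2 i, i < #|A| & y = (s ^+ i)%g x.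
Proof. by move=> Ax Ay; rewrite -(cycA Ax); apply: porbit_expP; rewrite cycA. Qed.

Lemma cycle_on_exp_inj x i j :
  x \in A -> i < #|A| -> j < #|A| -> (s ^+ i)%g x = (s ^+ j)%g x -> i = j.
Proof. by move=> Ax; rewrite -(cycA Ax); apply: porbit_exp_inj. Qed.

Lemma cycle_on_exp_fix x k : x \in A -> 0 < k < #|A| -> (s ^+ k)%g x != x.
Proof.
move=> Ax /andP[k_gt0 ltk]; apply/eqP => sx.
have := @cycle_on_exp_inj x k 0 Ax ltk (leq_ltn_trans (leq0n _) ltk).
by rewrite expg0 perm1 sx => /(_ erefl) k0; rewrite k0 in k_gt0.
Qed.

Lemma cycle_on_fix x : 1 < #|A| -> x \in A -> s x != x.
Proof. by move=> A_gt1 /(@cycle_on_exp_fix _ 1); rewrite expg1; apply. Qed.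

End PermOrbit.

Section NCycles.

Variables (n : nat) (T : finType).
Hypothesis cardT : #|T| = n.+1.

Lemma card_setC1 (q : T) : #|[set~ q]| = n.
Proof. by rewrite cardsC1 cardT. Qed.

Lemma is_cycle_of_length_on (s : {perm T}) :
  is_cycle_of_length n s -> exists q, cycle_on s [set~ q].
Proof.
move=> [x [card_x _]].
have /cards1P[q orbitC] : #|~: porbit s x| == 1.
  by apply/eqP; have := cardsC (porbit s x); rewrite card_x cardT; lia.
exists q; rewrite -orbitC setCK => y x_y.
by apply/eqP; rewrite eq_porbit_mem.
Qed.

Lemma n_cycle_has_fix (s : {perm T}) : is_cycle_of_length n s -> exists x, s x = x.
Proof. by move=> /is_cycle_of_length_on[q /cycle_on_setC1_fix]; exists q. Qed.

Hypothesis n_gt1 : 1 < n.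

Lemma cycle_on_setC1_fix_eq (s : {perm T}) q x :
  cycle_on s [set~ q] -> s x = x -> x = q.
Proof.
move=> cyc /eqP; apply: contraTeq => xq.
by apply: (cycle_on_fix cyc); rewrite ?card_setC1 ?inE.
Qed.

Lemma n_cycle_fix_uniq (s : {perm T}) x y :
  is_cycle_of_length n s -> s x = x -> s y = y -> x = y.
Proof.
move=> /is_cycle_of_length_on[q cyc].
by move=> /(cycle_on_setC1_fix_eq cyc)-> /(cycle_on_setC1_fix_eq cyc)->.
Qed.

Lemma mul_exp_common_fix (a b : {perm T}) p :
  cycle_on a [set~ p] -> cycle_on b [set~ p] ->
  exists2 d, 0 < d < n & ~ is_cycle_of_length n (a * b ^+ d)%g.
Proof.
move=> cyc_a cyc_b.
have [x xp] : exists x, x \in [set~ p].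
  by apply/set0Pn; rewrite -card_gt0 card_setC1; lia.
have [d ltd x_def] := cycle_on_expP cyc_b (cycle_on_perm cyc_a xp) xp.
rewrite card_setC1 in ltd.
have d_gt0 : 0 < d.
  case: d x_def {ltd} => //; rewrite expg0 perm1 => /esym/(cycle_on_setC1_fix_eq cyc_a) xpE.
  by move: xp; rewrite xpE !inE eqxx.
exists d; first by rewrite d_gt0 ltd.
move=> cyc_abd.
have fix_x : (a * b ^+ d)%g x = x by rewrite permM -x_def.
have fix_p : (a * b ^+ d)%g p = p.
  by rewrite permM (cycle_on_setC1_fix cyc_a) permX_fix // (cycle_on_setC1_fix cyc_b).
by move: xp; rewrite (n_cycle_fix_uniq cyc_abd fix_x fix_p) !inE eqxx.
Qed.

Section DistinctFixedPoints.

Variables (a b : {perm T}) (p q : T).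
Hypotheses (pq : p != q) (cyc_a : cycle_on a [set~ p]) (cyc_b : cycle_on b [set~ q]).

Lemma mul_exp_fix_a_neq k y : (b ^+ k)%g (a y) = y -> a y != q.
Proof.
move=> fix_y; apply: (contra_neq _ pq) => ayq.
have yq : y = q by rewrite -fix_y ayq permX_fix // (cycle_on_setC1_fix cyc_b).
have aq : a q = q by rewrite -{1}yq ayq.
by rewrite -(cycle_on_setC1_fix_eq cyc_a aq).
Qed.

Lemma mul_exp_fix_notin k y :
  0 < k < n -> (b ^+ k)%g (a y) = y -> y \notin [set p; q; (a^-1)%g q].
Proof.
move=> k_bounds fix_y; have ayq := mul_exp_fix_a_neq fix_y.
have yp : y != p.
  have p_in : p \in [set~ q] by rewrite !inE.
  rewrite -(card_setC1 q) in k_bounds.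
  apply: (contra_neq _ (cycle_on_exp_fix cyc_b p_in k_bounds)) => yp.
  by rewrite -{2}yp -fix_y yp (cycle_on_setC1_fix cyc_a).
have yq : y != q.
  by rewrite -fix_y -in_setC1 cycle_on_exp // in_setC1.
have yr : y != (a^-1)%g q by apply: contra_neq ayq => ->; rewrite permKV.
by rewrite !inE !negb_or yp yq yr.
Qed.

Lemma mul_exp_fix_exp_uniq i j y :
  i < n -> j < n -> (b ^+ i)%g (a y) = y -> (b ^+ j)%g (a y) = y -> i = j.
Proof.
move=> lti ltj fix_i fix_j.
have ay_in : a y \in [set~ q] by rewrite in_setC1 (mul_exp_fix_a_neq fix_i).
apply: (cycle_on_exp_inj cyc_b ay_in); rewrite ?card_setC1 //.
by rewrite fix_i fix_j.
Qed.

Lemma card_fix_excluded : #|[set p; q; (a^-1)%g q]| = 3.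
Proof.
have rq : (a^-1)%g q != q.
  apply: (contra_neq _ pq) => rqE.
  have aq : a q = q by rewrite -{1}rqE permKV.
  by rewrite -(cycle_on_setC1_fix_eq cyc_a aq).
have rp : (a^-1)%g q != p.
  apply: (contra_neq _ pq) => rpE.
  by rewrite -[q](permKV a) rpE (cycle_on_setC1_fix cyc_a).
by rewrite setUC cardsU1 cards2 !inE negb_or rp rq pq.
Qed.

Lemma mul_exp_fixfree : exists2 d, 0 < d < n & forall x, (a * b ^+ d)%g x != x.
Proof.
have [d /andP[d_gt0 /forallP fixfree] | no_fixfree] :=
  pickP [pred d : 'I_n | (0 < d) && [forall x, (a * b ^+ d)%g x != x]].
  by exists d; rewrite ?d_gt0 ?ltn_ord.
have lt_n (i : 'I_n.-1) : i.+1 < n by have := ltn_ord i; lia.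
have /fin_all_exists[g g_fix] : forall i : 'I_n.-1, exists x, (b ^+ i.+1)%g (a x) = x.
  move=> i; have /negbT := no_fixfree (Ordinal (lt_n i)).
  by rewrite /= negb_forall => /existsP[x /negPn/eqP]; rewrite permM; exists x.
have g_inj : injective g.
  move=> i j gij; apply/val_inj/succn_inj.
  by apply: (mul_exp_fix_exp_uniq (lt_n i) (lt_n j) (g_fix i)); rewrite gij g_fix.
have sub : g @: setT \subset ~: [set p; q; (a^-1)%g q].
  apply/subsetP => _ /imsetP[i _ ->]; rewrite in_setC.
  by apply: mul_exp_fix_notin (g_fix i); rewrite lt_n.
have := subset_leq_card sub; rewrite card_imset // cardsT card_ord.
by have := cardsC [set p; q; (a^-1)%g q]; rewrite card_fix_excluded cardT; lia.
Qed.

End DistinctFixedPoints.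

End NCycles.

Theorem lemma1 (n : nat) (hn : 2 <= n) (a b : 'S_(n.+1)) :
  is_cycle_of_length n a -> is_cycle_of_length n b ->
  exists d : nat, 1 <= d <= n - 1 /\ ~ is_cycle_of_length n (a * b ^+ d)%g.
Proof.
have cardT : #|'I_n.+1| = n.+1 by rewrite card_ord.
move=> /(is_cycle_of_length_on cardT)[p cyc_a]
        /(is_cycle_of_length_on cardT)[q cyc_b].
have [pq | pq] := eqVneq p q.
  rewrite -pq in cyc_b.
  have [d ltd not_cyc] := mul_exp_common_fix cardT hn cyc_a cyc_b.
  by exists d; split; first lia.
have [d ltd fixfree] := mul_exp_fixfree cardT hn pq cyc_a cyc_b.
exists d; split; first lia.
by move=> /(n_cycle_has_fix cardT)[x /eqP]; apply/negP.
Qed.
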